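(* Let $R$ be a commutative ring, $\mathcal{M}$ a nonempty set, $X$ a set, $A(X)$ the free $\mathcal{M}$-algebra over $R$ on $X$, and $F=\bigoplus_{x\in X}Rx\subset A(X)$. (i) There is a natural isomorphism of $R$-group functors $\mathbf{GL}_R(F)\simeq\mathbf{Aut}(A(X),F)$. (ii) Let $A$ be an $\mathcal{M}$-algebra over $R$ containing a copy of $F$ as an $R$-submodule which generates $A$ as an $\mathcal{M}$-algebra, and assume that the canonical map $F\otimes_R S\to A\otimes_R S$ is injective for all commutative $R$-algebras $S$ (e.g. if $F$ is locally a direct summand of $A$). Then the construction $\theta\mapsto\widetilde{\theta|_{F}}$ (applied over each $S$, where $\widetilde{\theta|_F}$ is the unique $\mathcal{M}$-algebra endomorphism of $A(X)\otimes_R S$ extending $\theta$ on $X$) yields an injective morphism of $R$-group functors $\mathbf{Aut}(A,F)\to\mathbf{Aut}(A(X),F)\simeq\mathbf{GL}_R(F)$.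
   Context: An $\mathcal{M}$-algebra over $R$ is an $R$-module with $R$-bilinear products $(a,b)\mapsto a_m b$, $m\in\mathcal{M}$; homomorphisms preserve all $m$-products. The free $\mathcal{M}$-magma $M(X)$: $M^1(X)=X$, $M^k(X)=\coprod_{1\le j<k,\ m\in\mathcal{M}}M^j(X)\times\{m\}\times M^{k-j}(X)$, $M(X)=\coprod_k M^k(X)$, $a_mb=(a,m,b)$; $A(X)$ is the free $R$-module on $M(X)$ with bilinearly extended products, universal for set maps from $X$ into $\mathcal{M}$-algebras. For an $R$-module $F$, $\mathbf{GL}_R(F)(S)=\operatorname{GL}_S(F\otimes_R S)$. For an $\mathcal{M}$-algebra $B$ with submodule $F$, $\mathbf{Aut}(B,F)(S)$ is the group of $\mathcal{M}$-algebra automorphisms of $B\otimes_R S$ over $S$ that preserve the image of $F\otimes_RS$, functorial in $S$ via base change. *)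

From HB Require Import structures.
From mathcomp Require Import all_boot all_order all_algebra.
Set Implicit Arguments. Unset Strict Implicit. Unset Printing Implicit Defensive.
Import GRing.Theory.
Local Open Scope ring_scope.

(* ---------- The free M-magma M(X) (binary trees, = the graded coproduct) *)
Inductive magma (X M : Type) : Type :=
  | Leaf of X
  | Node of magma X M & M & magma X M.
Arguments Leaf {X M}.
Arguments Node {X M}.

(* ---------- Formal S-linear combinations  sum_i s_i [t_i]  (representatives) *)
Definition fsum (S T : Type) := seq (S * T).

Section Formal.
Variable S : comPzRingType.

Definition fgen (T : Type) (t : T) : fsum S T := [:: (1, t)].
Definition fadd (T : Type) (u v : fsum S T) : fsum S T := u ++ v.
Definition fscale (T : Type) (s : S) (u : fsum S T) : fsum S T :=
  [seq (s * p.1, p.2) | p <- u].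
Definition fmapT (T T' : Type) (g : T -> T') (u : fsum S T) : fsum S T' :=
  [seq (p.1, g p.2) | p <- u].
Definition fprod (T M : Type) (mulT : M -> T -> T -> T) (m : M)
    (u v : fsum S T) : fsum S T :=
  [seq (p.1 * q.1, mulT m p.2 q.2) | p <- u, q <- v].

Definition fev (T : Type) (W : lmodType S) (g : T -> W) (u : fsum S T) : W :=
  \sum_(p <- u) p.1 *: g p.2.

(* equality in the free S-module on T *)
Definition feq (T : Type) (u v : fsum S T) : Prop :=
  forall (W : lmodType S) (g : T -> W), fev g u = fev g v.

(* equality in B (x)_R S, S an R-algebra via iS : defined by the universal
   property of the tensor product (kernel of fsum S B -> B (x)_R S) *)
Definition teq (R : comPzRingType) (iS : {rmorphism R -> S}) (B : lmodType R)
    (u v : fsum S B) : Prop :=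
  forall (W : lmodType S) (f : B -> W),
    (forall (r : R) (a b : B), f (r *: a + b) = iS r *: f a + f b) ->
    fev f u = fev f v.

Section Maps.
Variables (T : Type) (E : fsum S T -> fsum S T -> Prop).

Definition is_lin (phi : fsum S T -> fsum S T) : Prop :=
  (forall u v, E u v -> E (phi u) (phi v)) /\
  (forall (s : S) u v, E (phi (fadd (fscale s u) v)) (fadd (fscale s (phi u)) (phi v))).

Definition meq (phi psi : fsum S T -> fsum S T) : Prop := forall u, E (phi u) (psi u).

Definition is_auto (phi : fsum S T -> fsum S T) : Prop :=
  is_lin phi /\ exists psi, is_lin psi /\
    meq (phi \o psi) id /\ meq (psi \o phi) id.

Variables (M : Type) (mulT : M -> T -> T -> T).

Definition is_Mhom (phi : fsum S T -> fsum S T) : Prop :=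
  forall m u v, E (phi (fprod mulT m u v)) (fprod mulT m (phi u) (phi v)).

Definition is_auto_pres (inS : fsum S T -> Prop) (phi : fsum S T -> fsum S T) : Prop :=
  is_lin phi /\ is_Mhom phi /\ (forall u, inS u -> inS (phi u)) /\
  exists psi, is_lin psi /\ is_Mhom psi /\ (forall u, inS u -> inS (psi u)) /\
    meq (phi \o psi) id /\ meq (psi \o phi) id.
End Maps.
End Formal.

Definition bc (S S' : comPzRingType) (h : S -> S') (T : Type)
    (phi : fsum S T -> fsum S T) (u : fsum S' T) : fsum S' T :=
  flatten [seq fscale p.1 [seq (h q.1, q.2) | q <- phi (fgen S p.2)] | p <- u].

(* GL_R(F)(S), F = free R-module on X, F (x) S = free S-module on X *)
Definition GLF (X : Type) (S : comPzRingType) (phi : fsum S X -> fsum S X) :=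
  is_auto (@feq S X) phi.

(* image of F (x) S in A(X) (x) S = free S-module on M(X) *)
Definition inF_AX (X M : Type) (S : comPzRingType) (u : fsum S (magma X M)) :=
  exists v : fsum S X, feq u (fmapT Leaf v).

Definition AutAX (X M : Type) (S : comPzRingType)
    (phi : fsum S (magma X M) -> fsum S (magma X M)) :=
  is_auto_pres (@feq S (magma X M)) (fun (m : M) (a b : magma X M) => Node a m b) (@inF_AX X M S) phi.

(* image of F (x) S in B (x) S, F embedded via its basis images iF *)
Definition inF_B (R : comPzRingType) (B : lmodType R) (X : Type) (iF : X -> B)
    (S : comPzRingType) (iS : {rmorphism R -> S}) (u : fsum S B) :=
  exists v : fsum S X, @teq S R iS B u (fmapT iF v).

Definition AutB (R : comPzRingType) (B : lmodType R) (M : Type)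
    (mul : M -> B -> B -> B) (X : Type) (iF : X -> B)
    (S : comPzRingType) (iS : {rmorphism R -> S}) (phi : fsum S B -> fsum S B) :=
  is_auto_pres (@teq S R iS B) mul (inF_B iF iS) phi.

Definition Ralg_hom (R S S' : comPzRingType) (iS : {rmorphism R -> S})
    (iS' : {rmorphism R -> S'}) (h : {rmorphism S -> S'}) :=
  forall r, h (iS r) = iS' r.

Definition bilinear_prods (R : comPzRingType) (B : lmodType R) (M : Type)
    (mul : M -> B -> B -> B) :=
  forall m (r : R) (a b c : B),
    mul m (r *: a + b) c = r *: mul m a c + mul m b c /\
    mul m c (r *: a + b) = r *: mul m c a + mul m c b.

Definition generates (R : comPzRingType) (B : lmodType R) (M : Type)
    (mul : M -> B -> B -> B) (X : Type) (iF : X -> B) :=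
  forall P : B -> Prop,
    (forall x, P (iF x)) -> P 0 ->
    (forall (r : R) a b, P a -> P b -> P (r *: a + b)) ->
    (forall m a b, P a -> P b -> P (mul m a b)) ->
    forall a, P a.

(* theta |-> theta|_F ~ : psi is the M-algebra endomorphism of A(X)(x)S
   whose value on each x in X is theta(x) (read in F (x) S) *)
Definition ext_rel (R : comPzRingType) (B : lmodType R) (X M : Type) (iF : X -> B)
    (S : comPzRingType) (iS : {rmorphism R -> S})
    (theta : fsum S B -> fsum S B)
    (psi : fsum S (magma X M) -> fsum S (magma X M)) : Prop :=
  is_lin (@feq S (magma X M)) psi /\ is_Mhom (@feq S (magma X M)) (fun (m : M) (a b : magma X M) => Node a m b) psi /\
  forall x, exists v : fsum S X,
    feq (psi (fgen S (Leaf x))) (fmapT Leaf v) /\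
    @teq S R iS B (theta (fgen S (iF x))) (fmapT iF v).

From Pilot Require Import Defs.
From HB Require Import structures.
From mathcomp Require Import all_boot all_order all_algebra.
From Stdlib Require Import IndefiniteDescription.
Import GRing.Theory.
Local Open Scope ring_scope.
Set Implicit Arguments. Unset Strict Implicit. Unset Printing Implicit Defensive.

(* A linear endomorphism of the free module F (x) S is determined by, and can be
   freely prescribed on, the basis X; likewise an M-algebra endomorphism of
   A(X) (x) S is determined by, and can be freely prescribed on, the leaves (by
   recursion on trees).  So an automorphism of A(X) preserving F (x) S is the
   extension of its restriction to F (x) S, and that restriction is invertible
   with inverse the restriction of the inverse; this gives (i).  For (ii), an
   automorphism theta of A preserving F (x) S sends each x to an element of
   F (x) S, which by injectivity of F (x) S -> A (x) S is a unique combination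
   of basis vectors; since F generates A, theta is determined by these values. *)

Definition fbind (S : comPzRingType) (T T' : Type) (k : T -> fsum S T') (u : fsum S T) :
  fsum S T' := flatten [seq fscale p.1 (k p.2) | p <- u].

Section Evaluation.
Variable S : comPzRingType.
Implicit Types (W : lmodType S).

Lemma fev_nil T W (g : T -> W) : fev g [::] = 0.
Proof. by rewrite /fev big_nil. Qed.

Lemma fev_cons T W (g : T -> W) p u : fev g (p :: u) = p.1 *: g p.2 + fev g u.
Proof. by rewrite /fev big_cons. Qed.

Lemma fev_cat T W (g : T -> W) u v : fev g (u ++ v) = fev g u + fev g v.
Proof. by rewrite /fev big_cat. Qed.

Lemma fev_fscale T W (g : T -> W) s (u : fsum S T) : fev g (fscale s u) = s *: fev g u.
Proof.
elim: u => [|p u IH]; first by rewrite /= !fev_nil scaler0.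
by rewrite /fscale /= fev_cons -/(fscale s u) IH fev_cons scalerDr scalerA.
Qed.

Lemma fev_fmapT T T' W (g : T' -> W) (k : T -> T') (u : fsum S T) :
  fev g (fmapT k u) = fev (g \o k) u.
Proof. by rewrite /fev /fmapT big_map. Qed.

Lemma fev_fgen T W (g : T -> W) t : fev g (fgen S t) = g t.
Proof. by rewrite /fgen fev_cons fev_nil addr0 scale1r. Qed.

Lemma eq_fev T W (g g' : T -> W) u : g =1 g' -> fev g u = fev g' u.
Proof. by move=> eq_g; apply: eq_bigr => p _; rewrite eq_g. Qed.

Lemma fev_fbind T T' W (g : T' -> W) (k : T -> fsum S T') u :
  fev g (fbind k u) = fev (fun t => fev g (k t)) u.
Proof.
elim: u => [|p u IH]; first by rewrite /fbind /= !fev_nil.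
by rewrite /fbind /= fev_cat -/(fbind k u) IH fev_fscale fev_cons.
Qed.

Lemma fev_zero T W u : fev (fun _ : T => 0 : W) u = 0.
Proof. by elim: u => [|p u IH]; rewrite ?fev_nil // fev_cons IH scaler0 addr0. Qed.

Lemma fev_scaleD T W (g1 g2 : T -> W) s u :
  fev (fun t => s *: g1 t + g2 t) u = s *: fev g1 u + fev g2 u.
Proof.
elim: u => [|p u IH]; first by rewrite !fev_nil scaler0 addr0.
rewrite !fev_cons IH !scalerDr !scalerA mulrC -!addrA; congr (_ + _).
by rewrite addrCA.
Qed.

Lemma scaler_fev T W (g : T -> W) s u : s *: fev g u = fev (fun b => s *: g b) u.
Proof. by rewrite -[LHS]addr0 -(fev_zero W u) -fev_scaleD; apply: eq_fev => t; rewrite addr0. Qed.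

Lemma exchange_fev T T' W (F : T -> T' -> W) u v :
  fev (fun a => fev (F a) v) u = fev (fun b => fev (F^~ b) u) v.
Proof.
elim: u => [|p u IH].
  by rewrite fev_nil; under [RHS]eq_fev do rewrite fev_nil; rewrite fev_zero.
rewrite fev_cons IH scaler_fev; under [RHS]eq_fev do rewrite fev_cons.
by rewrite -[in LHS](scale1r (fev _ v)) -fev_scaleD; apply: eq_fev => b; rewrite scale1r.
Qed.

Lemma fev_fprod T M W (g : T -> W) (mul : M -> T -> T -> T) m u v :
  fev g (Defs.fprod mul m u v) = fev (fun a => fev (fun b => g (mul m a b)) v) u.
Proof.
elim: u => [|p u IH]; first by rewrite /Defs.fprod /= !fev_nil.
rewrite /Defs.fprod /= fev_cat -/(Defs.fprod mul m u v) IH fev_cons scaler_fev.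
by congr (_ + _); rewrite /fev big_map; apply: eq_bigr => q _; rewrite /= scalerA mulrC.
Qed.
End Evaluation.

Definition semilinear (R S : comPzRingType) (iS : {rmorphism R -> S}) (B : lmodType R)
    (W : lmodType S) (f : B -> W) : Prop :=
  forall (r : R) (a b : B), f (r *: a + b) = iS r *: f a + f b.

Lemma feq_tested (S : comPzRingType) (T : Type) (u v : fsum S T) :
  feq u v <-> (forall (W : lmodType S) (f : T -> W), True -> fev f u = fev f v).
Proof. by split=> eq_uv W f; [move=> _|]; apply: eq_uv. Qed.
Arguments feq_tested {S T}.

Lemma teq_tested (S R : comPzRingType) (iS : {rmorphism R -> S}) (B : lmodType R)
    (u v : fsum S B) :
  teq iS u v <-> (forall (W : lmodType S) (f : B -> W), semilinear iS f -> fev f u = fev f v).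
Proof. by []. Qed.
Arguments teq_tested {S R iS B}.

(* The module equalities [feq] (free module) and [teq] (B (x)_R S) both say
   that two formal sums agree under every test map in some class [C]. *)
Section TestedEquality.
Variables (S : comPzRingType) (T : Type) (C : forall W : lmodType S, (T -> W) -> Prop).
Variable E : fsum S T -> fsum S T -> Prop.
Hypothesis E_tested :
  forall u v, E u v <-> (forall (W : lmodType S) (f : T -> W), C f -> fev f u = fev f v).

Lemma E_intro u v : (forall (W : lmodType S) (f : T -> W), C f -> fev f u = fev f v) -> E u v.
Proof. by move/E_tested. Qed.

Lemma E_elim u v : E u v -> forall (W : lmodType S) (f : T -> W), C f -> fev f u = fev f v.
Proof. by move/E_tested. Qed.

Lemma E_sym u v : E u v -> E v u.
Proof. by move=> Euv; apply: E_intro => W f Cf; rewrite (E_elim Euv). Qed.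

Lemma E_trans u v w : E u v -> E v w -> E u w.
Proof. by move=> Euv Evw; apply: E_intro => W f Cf; rewrite (E_elim Euv) // (E_elim Evw). Qed.

Lemma lin_nil phi : is_lin E phi -> E (phi [::]) [::].
Proof.
case=> _ phi_lin; apply: E_intro => W f Cf.
have := E_elim (phi_lin 1 [::] [::]) Cf.
rewrite fev_cat fev_fscale scale1r fev_nil => /eqP.
by rewrite addrC -subr_eq subrr => /eqP.
Qed.

Lemma lin_fbind_gen phi : is_lin E phi -> forall u, E (phi u) (fbind (fun t => phi (fgen S t)) u).
Proof.
move=> phi_lin; elim=> [|p u IH]; first exact: lin_nil.
case: phi_lin => phi_resp phi_add.
have split_head : E (p :: u) (fadd (fscale p.1 (fgen S p.2)) u).
  by apply: E_intro => W f Cf; rewrite fev_cat fev_fscale fev_fgen fev_cons.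
apply: E_trans (phi_resp _ _ split_head) _; apply: E_trans (phi_add _ _ _) _.
by apply: E_intro => W f Cf; rewrite /fbind /= -/(fbind _ u) !fev_cat (E_elim IH).
Qed.

Lemma fbind_resp T0 (k k' : T0 -> fsum S T) u :
  (forall t, E (k t) (k' t)) -> E (fbind k u) (fbind k' u).
Proof.
move=> Ekk'; apply: E_intro => W f Cf; rewrite !fev_fbind.
by apply: eq_fev => t; rewrite (E_elim (Ekk' t)).
Qed.

Lemma lin_eq_on_gen phi phi' : is_lin E phi -> is_lin E phi' ->
  (forall t, E (phi (fgen S t)) (phi' (fgen S t))) -> meq E phi phi'.
Proof.
move=> phi_lin phi'_lin eq_gen u.
apply: E_trans (lin_fbind_gen phi_lin u) _; apply: E_sym.
exact: E_trans (lin_fbind_gen phi'_lin u) (fbind_resp _ (fun t => E_sym (eq_gen t))).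
Qed.

Lemma is_lin_comp phi psi : is_lin E phi -> is_lin E psi -> is_lin E (phi \o psi).
Proof.
move=> [phi_resp phi_add] [psi_resp psi_add].
split=> [u v Euv|s u v] /=; first exact/phi_resp/psi_resp.
exact: E_trans (phi_resp _ _ (psi_add s u v)) (phi_add _ _ _).
Qed.

Lemma is_Mhom_comp M (mulT : M -> T -> T -> T) phi psi : is_lin E phi ->
  is_Mhom E mulT phi -> is_Mhom E mulT psi -> is_Mhom E mulT (phi \o psi).
Proof.
move=> [phi_resp _] phi_hom psi_hom m u v /=.
exact: E_trans (phi_resp _ _ (psi_hom m u v)) (phi_hom _ _ _).
Qed.

Lemma fprod_resp M (mulT : M -> T -> T -> T) :
  (forall (W : lmodType S) (f : T -> W) m a, C f -> C (fun b => f (mulT m a b))) ->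
  (forall (W : lmodType S) (f : T -> W) m v,
     C f -> C (fun a => fev (fun b => f (mulT m a b)) v)) ->
  forall m u u' v v', E u u' -> E v v' -> E (Defs.fprod mulT m u v) (Defs.fprod mulT m u' v').
Proof.
move=> C_right C_left m u u' v v' Euu' Evv'; apply: E_intro => W f Cf.
rewrite !fev_fprod (E_elim Euu' (C_left _ _ _ _ Cf)).
by apply: eq_fev => a; apply: (E_elim Evv' (C_right _ _ _ _ Cf)).
Qed.
End TestedEquality.

Section FreeModule.
Variable S : comPzRingType.

Lemma feq_sym T (u v : fsum S T) : feq u v -> feq v u.
Proof. by move=> eq_uv W g; rewrite eq_uv. Qed.

Lemma feq_trans T (u v w : fsum S T) : feq u v -> feq v w -> feq u w.
Proof. by move=> eq_uv eq_vw W g; rewrite eq_uv eq_vw. Qed.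

Lemma fbind_is_lin T (k : T -> fsum S T) : is_lin (@feq S T) (fbind k).
Proof.
split=> [u v eq_uv W g|s u v W g]; first by rewrite !fev_fbind; apply: eq_uv.
by rewrite !(fev_fbind, fev_cat, fev_fscale).
Qed.

Lemma id_is_lin T : is_lin (@feq S T) id.
Proof. by split=> [u v|s u v W g]. Qed.

Lemma fbind_fgen T T' (k : T -> fsum S T') t : feq (fbind k (fgen S t)) (k t).
Proof. by move=> W g; rewrite fev_fbind fev_fgen. Qed.

Lemma fbind_fgen_id T (u : fsum S T) : feq (fbind (@fgen S T) u) u.
Proof. by move=> W g; rewrite fev_fbind; under eq_fev do rewrite fev_fgen. Qed.

Lemma fbind_comp T T' T'' (k : T' -> fsum S T'') (k' : T -> fsum S T') (u : fsum S T) :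
  feq (fbind k (fbind k' u)) (fbind (fun t => fbind k (k' t)) u).
Proof. by move=> W g; rewrite !fev_fbind; apply: eq_fev => t; rewrite fev_fbind. Qed.

Lemma fbind_fmapT T T' T'' (k : T' -> fsum S T'') (j : T -> T') (u : fsum S T) :
  feq (fbind k (fmapT j u)) (fbind (k \o j) u).
Proof. by move=> W g; rewrite !fev_fbind fev_fmapT. Qed.

Lemma fmapT_fbind T T' T'' (k : T -> fsum S T') (j : T' -> T'') (u : fsum S T) :
  feq (fmapT j (fbind k u)) (fbind (fmapT j \o k) u).
Proof. by move=> W g; rewrite fev_fmapT !fev_fbind; apply: eq_fev => t; rewrite fev_fmapT. Qed.

Lemma fmapT_feq T T' (j : T -> T') (u v : fsum S T) : feq u v -> feq (fmapT j u) (fmapT j v).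
Proof. by move=> eq_uv W g; rewrite !fev_fmapT; apply: eq_uv. Qed.

Lemma fprod_feq T M (mul : M -> T -> T -> T) m (u u' v v' : fsum S T) :
  feq u u' -> feq v v' -> feq (Defs.fprod mul m u v) (Defs.fprod mul m u' v').
Proof. exact: (fprod_resp feq_tested). Qed.

Lemma fprod_fgen T M (mul : M -> T -> T -> T) m a b :
  feq (fgen S (mul m a b)) (Defs.fprod mul m (fgen S a) (fgen S b)).
Proof. by move=> W g; rewrite fev_fprod !fev_fgen. Qed.

Lemma fbind_Mhom T T' M M' (k : T -> fsum S T') (mul : M -> T -> T -> T)
    (mul' : M' -> T' -> T' -> T') m m' :
  (forall a b, feq (k (mul m a b)) (Defs.fprod mul' m' (k a) (k b))) ->
  forall u v, feq (fbind k (Defs.fprod mul m u v)) (Defs.fprod mul' m' (fbind k u) (fbind k v)).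
Proof.
move=> k_hom u v W g.
rewrite [LHS]fev_fbind [LHS]fev_fprod [RHS]fev_fprod [RHS]fev_fbind; apply: eq_fev => a.
under [RHS]eq_fev do rewrite fev_fbind.
by rewrite exchange_fev; apply: eq_fev => b; rewrite k_hom fev_fprod.
Qed.
End FreeModule.

Section Restriction.
Variables (S : comPzRingType) (T X : Type) (C : forall W : lmodType S, (T -> W) -> Prop).
Variable E : fsum S T -> fsum S T -> Prop.
Hypothesis E_tested :
  forall u v, E u v <-> (forall (W : lmodType S) (f : T -> W), C f -> fev f u = fev f v).
Variable k : X -> T.

Lemma lin_fmapT theta (v : X -> fsum S X) : is_lin E theta ->
  (forall y, E (theta (fgen S (k y))) (fmapT k (v y))) ->
  forall u, E (theta (fmapT k u)) (fmapT k (fbind v u)).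
Proof.
move=> theta_lin theta_k u.
apply: (E_trans E_tested (lin_fbind_gen E_tested theta_lin (fmapT k u))).
apply: (E_intro E_tested) => W f Cf; rewrite fev_fbind !fev_fmapT fev_fbind.
by apply: eq_fev => y /=; rewrite (E_elim E_tested (theta_k y) Cf) fev_fmapT.
Qed.

Hypothesis fmapT_inj : forall u v, E (fmapT k u) (fmapT k v) -> feq u v.

Lemma restriction_inverse theta theta' (v w : X -> fsum S X) :
  is_lin E theta -> is_lin E theta' -> meq E (theta \o theta') id ->
  (forall y, E (theta (fgen S (k y))) (fmapT k (v y))) ->
  (forall y, E (theta' (fgen S (k y))) (fmapT k (w y))) ->
  meq (@feq S X) (fbind v \o fbind w) id.
Proof.
move=> theta_lin theta'_lin theta_theta' theta_k theta'_k.
apply: (lin_eq_on_gen feq_tested (is_lin_comp feq_tested (fbind_is_lin v) (fbind_is_lin w))).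
  exact: id_is_lin.
move=> x /=; apply: feq_trans ((fbind_is_lin v).1 _ _ (fbind_fgen w x)) _.
apply: fmapT_inj; apply: (E_trans E_tested (E_sym E_tested (lin_fmapT theta_lin theta_k (w x)))).
apply: (E_trans E_tested (theta_lin.1 _ _ (E_sym E_tested (theta'_k x)))).
exact: theta_theta'.
Qed.

Lemma auto_pres_restriction M (mulT : M -> T -> T -> T) theta :
  is_auto_pres E mulT (fun u => exists v, E u (fmapT k v)) theta ->
  exists v : X -> fsum S X,
    GLF (fbind v) /\ forall y, E (theta (fgen S (k y))) (fmapT k (v y)).
Proof.
move=> [theta_lin [_ [theta_F [theta' [theta'_lin [_ [theta'_F [inv1 inv2]]]]]]]].
have kF y : exists v, E (fgen S (k y)) (fmapT k v).
  by exists (fgen S y); apply: (E_intro E_tested).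
have [v theta_k] := functional_choice _ (fun y => theta_F _ (kF y)).
have [w theta'_k] := functional_choice _ (fun y => theta'_F _ (kF y)).
exists v; split=> //; split; first exact: fbind_is_lin.
exists (fbind w); split; first exact: fbind_is_lin.
split; first exact: restriction_inverse theta_lin theta'_lin inv1 theta_k theta'_k.
exact: restriction_inverse theta'_lin theta_lin inv2 theta'_k theta_k.
Qed.
End Restriction.

Section FreeMagmaAlgebra.
Variables (X M : Type) (S : comPzRingType).
Local Notation mag := (magma X M).
Local Notation node := (fun (m : M) (a b : mag) => Node a m b).
Local Notation feqA := (@feq S mag).

Fixpoint tree_ext (g : X -> fsum S mag) (t : mag) : fsum S mag :=
  match t with
  | Leaf x => g x
  | Node a m b => Defs.fprod node m (tree_ext g a) (tree_ext g b)
  end.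

Definition extF (phi : fsum S X -> fsum S X) : fsum S mag -> fsum S mag :=
  fbind (tree_ext (fun x => fmapT Leaf (phi (fgen S x)))).

Lemma fmapT_Leaf_inj (u v : fsum S X) : feqA (fmapT Leaf u) (fmapT Leaf v) -> feq u v.
Proof.
move=> eq_uv W g; have := eq_uv W (fun t => if t is Leaf x then g x else 0).
by rewrite !fev_fmapT.
Qed.

Lemma fprod_node_feq m (u u' v v' : fsum S mag) :
  feqA u u' -> feqA v v' -> feqA (Defs.fprod node m u v) (Defs.fprod node m u' v').
Proof. exact: fprod_feq. Qed.

Lemma tree_ext_Mhom g : is_Mhom feqA node (fbind (tree_ext g)).
Proof. by move=> m; apply: fbind_Mhom. Qed.

Lemma tree_ext_resp g g' :
  (forall x, feqA (g x) (g' x)) -> forall t, feqA (tree_ext g t) (tree_ext g' t).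
Proof. by move=> eq_g; elim=> [x|a IHa m b IHb] //=; apply: fprod_node_feq. Qed.

Lemma Mhom_eq_on_leaves psi psi' : is_lin feqA psi -> is_lin feqA psi' ->
  is_Mhom feqA node psi -> is_Mhom feqA node psi' ->
  (forall x, feqA (psi (fgen S (Leaf x))) (psi' (fgen S (Leaf x)))) -> meq feqA psi psi'.
Proof.
move=> psi_lin psi'_lin psi_hom psi'_hom eq_leaves.
apply: (lin_eq_on_gen feq_tested psi_lin psi'_lin).
elim=> [x|a IHa m b IHb]; first exact: eq_leaves.
have gen_node : feqA (fgen S (Node a m b)) (Defs.fprod node m (fgen S a) (fgen S b)).
  exact: fprod_fgen.
apply: feq_trans (psi_lin.1 _ _ gen_node) _; apply: feq_trans (psi_hom _ _ _) _.
apply: feq_trans (fprod_node_feq m IHa IHb) _; apply: feq_sym.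
exact: feq_trans (psi'_lin.1 _ _ gen_node) (psi'_hom _ _ _).
Qed.

Lemma extF_leaf phi x : feqA (extF phi (fgen S (Leaf x))) (fmapT Leaf (phi (fgen S x))).
Proof. exact: fbind_fgen. Qed.

Lemma extF_inF phi u : is_lin (@feq S X) phi -> inF_AX u -> inF_AX (extF phi u).
Proof.
move=> phi_lin [v eq_uv]; exists (phi v).
apply: feq_trans ((fbind_is_lin _).1 _ _ eq_uv) _.
apply: feq_trans (fbind_fmapT _ _ _) _; apply: feq_trans (feq_sym (fmapT_fbind _ _ _)) _.
exact/fmapT_feq/feq_sym/(lin_fbind_gen feq_tested phi_lin).
Qed.

Lemma extF_resp phi phi' : meq (@feq S X) phi phi' -> meq feqA (extF phi) (extF phi').
Proof.
move=> eq_phi u; apply: (fbind_resp feq_tested) => t.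
by apply: tree_ext_resp => x; apply/fmapT_feq/eq_phi.
Qed.

Lemma extF_id : meq feqA (extF id) id.
Proof.
move=> u; apply: feq_trans (fbind_fgen_id u); apply: (fbind_resp feq_tested).
elim=> [x|a IHa m b IHb] //=.
exact: feq_trans (fprod_node_feq m IHa IHb) (feq_sym (fprod_fgen node m a b)).
Qed.

Lemma extF_comp phi phi' : is_lin (@feq S X) phi ->
  meq feqA (extF phi \o extF phi') (extF (phi \o phi')).
Proof.
move=> phi_lin u /=; apply: feq_trans (fbind_comp _ _ _) _.
apply: (fbind_resp feq_tested); elim=> [x|a IHa m b IHb] /=.
  apply: feq_trans (fbind_fmapT _ _ _) _; apply: feq_trans (feq_sym (fmapT_fbind _ _ _)) _.
  exact/fmapT_feq/feq_sym/(lin_fbind_gen feq_tested phi_lin).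
exact: feq_trans (tree_ext_Mhom _ _ _ _) (fprod_node_feq m IHa IHb).
Qed.

Lemma extF_AutAX phi : GLF phi -> AutAX (extF phi).
Proof.
move=> [phi_lin [phi' [phi'_lin [inv1 inv2]]]].
have extF_inv psi psi' : is_lin (@feq S X) psi -> meq (@feq S X) (psi \o psi') id ->
    meq feqA (extF psi \o extF psi') id.
  move=> psi_lin inv u; apply: feq_trans (extF_comp _ psi_lin u) _.
  exact: feq_trans (extF_resp inv u) (extF_id u).
split; first exact: fbind_is_lin.
split; first exact: tree_ext_Mhom.
split; first by move=> u; apply: extF_inF.
exists (extF phi'); split; first exact: fbind_is_lin.
split; first exact: tree_ext_Mhom.
split; first by move=> u; apply: extF_inF.
by split; apply: extF_inv.
Qed.

Lemma extF_inj phi phi' : GLF phi -> GLF phi' ->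
  meq feqA (extF phi) (extF phi') -> meq (@feq S X) phi phi'.
Proof.
move=> [phi_lin _] [phi'_lin _] eq_ext.
apply: (lin_eq_on_gen feq_tested phi_lin phi'_lin) => x; apply: fmapT_Leaf_inj.
apply: feq_trans (feq_sym (extF_leaf _ x)) _.
exact: feq_trans (eq_ext _) (extF_leaf _ x).
Qed.

Lemma extF_surj psi : AutAX psi -> exists phi, GLF phi /\ meq feqA (extF phi) psi.
Proof.
move=> psi_aut; have [psi_lin [psi_hom _]] := psi_aut.
have [v [GLv psi_leaf]] := auto_pres_restriction feq_tested fmapT_Leaf_inj psi_aut.
exists (fbind v); split=> //.
apply: Mhom_eq_on_leaves => //; [exact: fbind_is_lin | exact: tree_ext_Mhom |] => x.
apply: feq_trans (extF_leaf _ x) _; apply: feq_trans (fmapT_feq _ (fbind_fgen v x)) _.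
exact: feq_sym.
Qed.
End FreeMagmaAlgebra.

Definition fmapc (S S' : comPzRingType) (h : S -> S') (T : Type) (u : fsum S T) : fsum S' T :=
  [seq (h q.1, q.2) | q <- u].

Definition restrict_scalars (S S' : comPzRingType) (h : S -> S') (W : lmodType S') : Type := W.
Arguments restrict_scalars {S S'} h W.

Section RestrictScalars.
Variables (S S' : comPzRingType) (h : {rmorphism S -> S'}) (W : lmodType S').

#[non_forgetful_inheritance]
HB.instance Definition _ := GRing.Zmodule.on (restrict_scalars h W).

Definition restr_scale (s : S) (w : restrict_scalars h W) : restrict_scalars h W :=
  h s *: (w : W).

Lemma restr_scaleA a b v : restr_scale a (restr_scale b v) = restr_scale (a * b) v.
Proof. by rewrite /restr_scale scalerA rmorphM. Qed.
Lemma restr_scale1 : left_id 1 restr_scale.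
Proof. by move=> v; rewrite /restr_scale rmorph1 scale1r. Qed.
Lemma restr_scaleDr : right_distributive restr_scale +%R.
Proof. by move=> a u v; rewrite /restr_scale scalerDr. Qed.
Lemma restr_scaleDl v : {morph restr_scale^~ v : a b / a + b}.
Proof. by move=> a b; rewrite /restr_scale rmorphD scalerDl. Qed.

#[non_forgetful_inheritance]
HB.instance Definition _ := GRing.Zmodule_isLmodule.Build S (restrict_scalars h W)
  restr_scaleA restr_scale1 restr_scaleDr restr_scaleDl.
End RestrictScalars.

Section BaseChange.
Variables (S S' : comPzRingType) (h : {rmorphism S -> S'}).

Lemma fev_restrict_scalars T (W : lmodType S') (f : T -> W) (u : fsum S T) :
  @fev S T (restrict_scalars h W) f u = fev f (fmapc h u).
Proof.
elim: u => [|p u IH]; first by rewrite /fmapc /= !fev_nil.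
by rewrite fev_cons IH /fmapc /= fev_cons.
Qed.

Lemma fmapc_feq T (u v : fsum S T) : feq u v -> feq (fmapc h u) (fmapc h v).
Proof.
by move=> eq_uv W f; rewrite -!fev_restrict_scalars; apply: (eq_uv (restrict_scalars h W)).
Qed.

Lemma fmapc_teq (R : comPzRingType) (iS : {rmorphism R -> S}) (iS' : {rmorphism R -> S'})
    (B : lmodType R) (u v : fsum S B) :
  Ralg_hom iS iS' h -> teq iS u v -> teq iS' (fmapc h u) (fmapc h v).
Proof.
move=> h_alg eq_uv W f f_semilin; rewrite -!fev_restrict_scalars.
by apply: (eq_uv (restrict_scalars h W) f) => r a b; rewrite f_semilin -h_alg.
Qed.

Lemma fmapc_fprod T M (mul : M -> T -> T -> T) m (u v : fsum S T) :
  fmapc h (Defs.fprod mul m u v) = Defs.fprod mul m (fmapc h u) (fmapc h v).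
Proof.
elim: u => [|p u IH] //=; rewrite /Defs.fprod /= -/(Defs.fprod mul m u v) /fmapc map_cat.
rewrite -/(fmapc h (Defs.fprod mul m u v)) IH -map_comp; congr (_ ++ _).
by rewrite -map_comp; apply: eq_map => q /=; rewrite rmorphM.
Qed.

Lemma fmapc_fmapT T T' (k : T -> T') (u : fsum S T) : fmapc h (fmapT k u) = fmapT k (fmapc h u).
Proof. by rewrite /fmapc /fmapT -!map_comp. Qed.

Lemma bcE T (phi : fsum S T -> fsum S T) : bc h phi = fbind (fun t => fmapc h (phi (fgen S t))).
Proof. by []. Qed.

Lemma bc_fgen T (phi : fsum S T -> fsum S T) t :
  feq (bc h phi (fgen S' t)) (fmapc h (phi (fgen S t))).
Proof. by rewrite bcE; apply: fbind_fgen. Qed.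

Lemma extF_bc X M (phi : fsum S X -> fsum S X) :
  meq (@feq S' _) (@extF X M S' (bc h phi)) (bc h (@extF X M S phi)).
Proof.
move=> u; rewrite !bcE; apply: (fbind_resp feq_tested) => t.
have extF_fgen_t : feq (fmapc h (@extF X M S phi (fgen S t)))
                  (fmapc h (tree_ext (fun x => fmapT Leaf (phi (fgen S x))) t)).
  exact/fmapc_feq/fbind_fgen.
apply: feq_trans (feq_sym extF_fgen_t); elim: t {extF_fgen_t} => [x|a IHa m b IHb] /=.
  by rewrite fmapc_fmapT; apply/fmapT_feq/fbind_fgen.
by rewrite fmapc_fprod; apply: fprod_node_feq.
Qed.
End BaseChange.

Section TensorProduct.
Variables (R : comPzRingType) (B : lmodType R) (M : Type) (mul : M -> B -> B -> B).
Hypothesis mul_bilinear : bilinear_prods mul.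
Variables (S : comPzRingType) (iS : {rmorphism R -> S}).
Local Notation teqS := (@teq S R iS B).

Lemma teq_sym u v : teqS u v -> teqS v u.
Proof. exact: (E_sym teq_tested). Qed.

Lemma teq_trans u v w : teqS u v -> teqS v w -> teqS u w.
Proof. exact: (E_trans teq_tested). Qed.

Lemma feq_teq (u v : fsum S B) : feq u v -> teqS u v.
Proof. by move=> eq_uv W f _; apply: eq_uv. Qed.

Lemma fmapT_teq X (j : X -> B) (u v : fsum S X) : feq u v -> teqS (fmapT j u) (fmapT j v).
Proof. by move=> eq_uv W f _; rewrite !fev_fmapT; apply: eq_uv. Qed.

Lemma teq_fgen0 : teqS (fgen S 0) [::].
Proof.
move=> W f f_semilin; rewrite fev_fgen fev_nil.
by have := f_semilin (-1) 0 0; rewrite scaler0 addr0 rmorphN1 scaleN1r addNr.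
Qed.

Lemma teq_fgenD r a b : teqS (fgen S (r *: a + b)) (fadd (fscale (iS r) (fgen S a)) (fgen S b)).
Proof. by move=> W f f_semilin; rewrite fev_cat fev_fscale !fev_fgen f_semilin. Qed.

Lemma fadd_fscale_teq s (u u' v v' : fsum S B) :
  teqS u u' -> teqS v v' -> teqS (fadd (fscale s u) v) (fadd (fscale s u') v').
Proof. by move=> eq_u eq_v W f f_semilin; rewrite !fev_cat !fev_fscale eq_u ?eq_v. Qed.

(* Bilinearity of the products is what makes them well defined on B (x) S. *)
Lemma fprod_teq m (u u' v v' : fsum S B) :
  teqS u u' -> teqS v v' -> teqS (Defs.fprod mul m u v) (Defs.fprod mul m u' v').
Proof.
apply: (fprod_resp teq_tested).
  by move=> W f m' a f_semilin r b c; rewrite /= (mul_bilinear m' r b c a).2 f_semilin.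
move=> W f m' v0 f_semilin r a a' /=; rewrite -fev_scaleD; apply: eq_fev => b.
by rewrite (mul_bilinear m' r a a' b).1 f_semilin.
Qed.

Variables (X : Type) (iF : X -> B).
Hypothesis iF_generates : generates mul iF.

Lemma AutB_eq_on_F theta1 theta2 :
  AutB mul iF iS theta1 -> AutB mul iF iS theta2 ->
  (forall x, teqS (theta1 (fgen S (iF x))) (theta2 (fgen S (iF x)))) ->
  meq teqS theta1 theta2.
Proof.
move=> [lin1 [hom1 _]] [lin2 [hom2 _]] eq_F.
apply: (lin_eq_on_gen teq_tested lin1 lin2); apply: iF_generates => //.
- apply: teq_trans (lin1.1 _ _ teq_fgen0) _; apply: teq_trans (lin_nil teq_tested lin1) _.
  apply: teq_sym; apply: teq_trans (lin2.1 _ _ teq_fgen0) _; exact: (lin_nil teq_tested lin2).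
- move=> r a b eq_a eq_b.
  apply: teq_trans (lin1.1 _ _ (teq_fgenD r a b)) _; apply: teq_trans (lin1.2 _ _ _) _.
  apply: teq_trans (fadd_fscale_teq _ eq_a eq_b) _; apply: teq_sym.
  exact: teq_trans (lin2.1 _ _ (teq_fgenD r a b)) (lin2.2 _ _ _).
- move=> m a b eq_a eq_b.
  have gen_mul : teqS (fgen S (mul m a b)) (Defs.fprod mul m (fgen S a) (fgen S b)).
    exact/feq_teq/fprod_fgen.
  apply: teq_trans (lin1.1 _ _ gen_mul) _; apply: teq_trans (hom1 _ _ _) _.
  apply: teq_trans (fprod_teq m eq_a eq_b) _; apply: teq_sym.
  exact: teq_trans (lin2.1 _ _ gen_mul) (hom2 _ _ _).
Qed.
End TensorProduct.

Section ExtensionOfRestriction.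
Variables (R : comPzRingType) (B : lmodType R) (M X : Type).
Variables (mul : M -> B -> B -> B) (iF : X -> B).
Local Notation node := (fun (m : M) (a b : magma X M) => Node a m b).
Local Notation teqB iS := (@teq _ R iS B).
Local Notation ext_relM iS := (@ext_rel R B X M iF _ iS).

Lemma ext_rel_comp (S : comPzRingType) (iS : {rmorphism R -> S}) theta1 theta2 psi1 psi2 :
  is_lin (teqB iS) theta1 ->
  ext_relM iS theta1 psi1 -> ext_relM iS theta2 psi2 ->
  ext_relM iS (theta1 \o theta2) (psi1 \o psi2).
Proof.
move=> theta1_lin [psi1_lin [psi1_hom psi1_F]] [psi2_lin [psi2_hom psi2_F]].
split; first exact: (is_lin_comp feq_tested).
split; first exact: (is_Mhom_comp feq_tested).
have [v1 /all_and2[psi1_leaf theta1_F]] := functional_choice _ psi1_F.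
move=> x; have [v2 [psi2_leaf theta2_F]] := psi2_F x.
exists (fbind v1 v2); split=> /=.
  apply: feq_trans (psi1_lin.1 _ _ psi2_leaf) _.
  exact: (lin_fmapT feq_tested psi1_lin psi1_leaf).
apply: teq_trans (theta1_lin.1 _ _ theta2_F) _.
exact: (lin_fmapT teq_tested theta1_lin theta1_F).
Qed.

Lemma ext_rel_bc (S S' : comPzRingType) (iS : {rmorphism R -> S}) (iS' : {rmorphism R -> S'})
    (h : {rmorphism S -> S'}) theta psi :
  Ralg_hom iS iS' h -> ext_relM iS theta psi -> ext_relM iS' (bc h theta) (bc h psi).
Proof.
move=> h_alg [psi_lin [psi_hom psi_F]].
split; first by rewrite bcE; apply: fbind_is_lin.
split.
  move=> m u v; rewrite bcE; apply: fbind_Mhom => a b /=; rewrite -fmapc_fprod; apply: fmapc_feq.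
  exact: feq_trans (psi_lin.1 _ _ (fprod_fgen node m a b)) (psi_hom _ _ _).
move=> x; have [v [psi_leaf theta_F]] := psi_F x; exists (fmapc h v); split.
  by apply: feq_trans (bc_fgen h psi (Leaf x)) _; rewrite -fmapc_fmapT; apply: fmapc_feq.
apply: teq_trans (feq_teq (bc_fgen h theta (iF x))) _.
by rewrite -fmapc_fmapT; apply: fmapc_teq.
Qed.

Hypothesis F_injective : forall (S : comPzRingType) (iS : {rmorphism R -> S}) (u v : fsum S X),
  teqB iS (fmapT iF u) (fmapT iF v) -> feq u v.

Variables (S : comPzRingType) (iS : {rmorphism R -> S}).

Lemma ext_rel_exists theta :
  AutB mul iF iS theta -> exists psi, ext_relM iS theta psi /\ AutAX psi.
Proof.
move=> theta_aut.
have [v [GLv theta_F]] := auto_pres_restriction teq_tested (@F_injective S iS) theta_aut.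
exists (@extF X M S (fbind v)); split; last exact: extF_AutAX.
split; first exact: fbind_is_lin.
split; first exact: tree_ext_Mhom.
move=> x; exists (v x); split=> //.
exact: feq_trans (extF_leaf _ x) (fmapT_feq _ (fbind_fgen v x)).
Qed.

Lemma ext_rel_unique theta psi psi' :
  ext_relM iS theta psi -> ext_relM iS theta psi' -> meq (@feq S _) psi psi'.
Proof.
move=> [psi_lin [psi_hom psi_F]] [psi'_lin [psi'_hom psi'_F]].
apply: Mhom_eq_on_leaves => // x.
have [v [psi_leaf theta_F]] := psi_F x; have [v' [psi'_leaf theta_F']] := psi'_F x.
apply: feq_trans psi_leaf _; apply: feq_trans _ (feq_sym psi'_leaf); apply: fmapT_feq.
exact: (@F_injective S iS) (teq_trans (teq_sym theta_F) theta_F').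
Qed.

Hypotheses (mul_bilinear : bilinear_prods mul) (iF_generates : generates mul iF).

Lemma ext_rel_inj theta1 theta2 psi1 psi2 :
  AutB mul iF iS theta1 -> AutB mul iF iS theta2 ->
  ext_relM iS theta1 psi1 -> ext_relM iS theta2 psi2 ->
  meq (@feq S _) psi1 psi2 -> meq (teqB iS) theta1 theta2.
Proof.
move=> theta1_aut theta2_aut [_ [_ psi1_F]] [_ [_ psi2_F]] eq_psi.
apply: (AutB_eq_on_F mul_bilinear iF_generates theta1_aut theta2_aut) => x.
have [v1 [psi1_leaf theta1_F]] := psi1_F x; have [v2 [psi2_leaf theta2_F]] := psi2_F x.
apply: teq_trans theta1_F _; apply: teq_trans _ (teq_sym theta2_F); apply: fmapT_teq.
apply: fmapT_Leaf_inj; apply: feq_trans (feq_sym psi1_leaf) _.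
exact: feq_trans (eq_psi _) psi2_leaf.
Qed.
End ExtensionOfRestriction.

Unset Implicit Arguments.
Theorem lemma4 (R : comPzRingType) (M : Type) (Mne : inhabited M) (X : Type) :
  (* (i) natural isomorphism of R-group functors GL_R(F) ~ Aut(A(X), F) *)
  (exists Phi : forall (S : comPzRingType), {rmorphism R -> S} ->
        (fsum S X -> fsum S X) -> (fsum S (magma X M) -> fsum S (magma X M)),
     (forall (S : comPzRingType) (iS : {rmorphism R -> S}) phi, GLF phi -> AutAX (Phi S iS phi)) /\
     (forall (S : comPzRingType) (iS : {rmorphism R -> S}) phi phi', GLF phi -> GLF phi' ->
        meq (@feq S X) phi phi' -> meq (@feq S _) (Phi S iS phi) (Phi S iS phi')) /\
     (forall (S : comPzRingType) (iS : {rmorphism R -> S}) phi phi', GLF phi -> GLF phi' ->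
        meq (@feq S _) (Phi S iS (phi \o phi')) (Phi S iS phi \o Phi S iS phi')) /\
     (forall (S : comPzRingType) (iS : {rmorphism R -> S}) phi phi', GLF phi -> GLF phi' ->
        meq (@feq S _) (Phi S iS phi) (Phi S iS phi') -> meq (@feq S X) phi phi') /\
     (forall (S : comPzRingType) (iS : {rmorphism R -> S}) psi, AutAX psi ->
        exists phi, GLF phi /\ meq (@feq S _) (Phi S iS phi) psi) /\
     (forall (S S' : comPzRingType) (iS : {rmorphism R -> S}) (iS' : {rmorphism R -> S'})
          (h : {rmorphism S -> S'}) (phi : fsum S X -> fsum S X),
        Ralg_hom iS iS' h -> GLF phi ->
        meq (@feq S' _) (Phi S' iS' (bc h phi)) (bc h (Phi S iS phi))))
  /\
  (* (ii) *)
  (forall (B : lmodType R) (mul : M -> B -> B -> B) (iF : X -> B),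
     bilinear_prods mul ->
     generates mul iF ->
     (forall (S : comPzRingType) (iS : {rmorphism R -> S}) (u v : fsum S X),
        teq iS (fmapT iF u) (fmapT iF v) -> feq u v) ->
     (forall (S : comPzRingType) (iS : {rmorphism R -> S}) theta, AutB mul iF iS theta ->
        exists psi, @ext_rel R B X M iF S iS theta psi /\ AutAX psi) /\
     (forall (S : comPzRingType) (iS : {rmorphism R -> S}) theta psi psi', AutB mul iF iS theta ->
        @ext_rel R B X M iF S iS theta psi -> @ext_rel R B X M iF S iS theta psi' ->
        meq (@feq S _) psi psi') /\
     (forall (S : comPzRingType) (iS : {rmorphism R -> S}) theta1 theta2 psi1 psi2,
        AutB mul iF iS theta1 -> AutB mul iF iS theta2 ->
        @ext_rel R B X M iF S iS theta1 psi1 -> @ext_rel R B X M iF S iS theta2 psi2 ->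
        @ext_rel R B X M iF S iS (theta1 \o theta2) (psi1 \o psi2)) /\
     (forall (S : comPzRingType) (iS : {rmorphism R -> S}) theta1 theta2 psi1 psi2,
        AutB mul iF iS theta1 -> AutB mul iF iS theta2 ->
        @ext_rel R B X M iF S iS theta1 psi1 -> @ext_rel R B X M iF S iS theta2 psi2 ->
        meq (@feq S _) psi1 psi2 -> meq (@teq S R iS B) theta1 theta2) /\
     (forall (S S' : comPzRingType) (iS : {rmorphism R -> S}) (iS' : {rmorphism R -> S'})
          (h : {rmorphism S -> S'}) theta psi,
        Ralg_hom iS iS' h -> AutB mul iF iS theta ->
        @ext_rel R B X M iF S iS theta psi ->
        @ext_rel R B X M iF S' iS' (bc h theta) (bc h psi))).
Proof.
split.
  exists (fun S _ phi => @extF X M S phi).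
  split; first by move=> S iS phi; apply: extF_AutAX.
  split; first by move=> S iS phi phi' _ _; apply: extF_resp.
  split; first by move=> S iS phi phi' [phi_lin _] _ u; apply/feq_sym/extF_comp.
  split; first by move=> S iS phi phi'; apply: extF_inj.
  split; first by move=> S iS psi; apply: extF_surj.
  by move=> S S' iS iS' h phi _ _; apply: extF_bc.
move=> B mul iF mul_bilinear iF_generates F_injective.
split; first by move=> S iS theta; apply: ext_rel_exists.
split; first by move=> S iS theta psi psi' _; apply: ext_rel_unique.
split; first by move=> S iS theta1 theta2 psi1 psi2 [theta1_lin _] _; apply: ext_rel_comp.
split; first by move=> S iS theta1 theta2 psi1 psi2; apply: ext_rel_inj.
by move=> S S' iS iS' h theta psi h_alg _; apply: ext_rel_bc.
Qed.
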